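(* A finite-dimensional algebra $\Lambda$ is ext-irreducible if and only if $\Lambda$ is mono-irreducible.
   Context: $\Bbbk$ is algebraically closed. Let $\Lambda=\Bbbk Q/I$ be the path algebra of a bound quiver (for an arbitrary finite-dimensional algebra the notions are taken for a Morita-equivalent bound quiver algebra). For a dimension vector $\mathbf d\in\mathbb N^{Q_0}$, $\mathrm{rep}_\Lambda(\mathbf d)$ is the affine variety of representations $V=(V_\alpha)_{\alpha\in Q_1}$, $V_\alpha\in M_{d_{t\alpha}\times d_{s\alpha}}(\Bbbk)$, satisfying the relations in $I$. Mono-irreducibility: for dimension vectors $\mathbf e\le\mathbf d$ (componentwise), $\mathcal M_\Lambda(\mathbf e,\mathbf d)$ is the variety of triples $(V,W,f)$ with $V\in\mathrm{rep}_\Lambda(\mathbf e)$, $W\in\mathrm{rep}_\Lambda(\mathbf d)$, $f=(f_x)$, $f_x\in M_{d_x\times e_x}(\Bbbk)$, an injective homomorphism $V\to W$ (i.e. $W_\alpha f_{s\alpha}=f_{t\alpha}V_\alpha$ for all $\alpha$ and each $f_x$ injective); $\Lambda$ is mono-irreducible if all $\mathcal M_\Lambda(\mathbf e,\mathbf d)$, $\mathbf e\le\mathbf d$, are irreducible. Ext-irreducibility: for $V\in\mathrm{rep}_\Lambda(\mathbf d)$, $U\in\mathrm{rep}_\Lambda(\mathbf e)$ and $Z=(Z_\alpha)_{\alpha\in Q_1}$ with $Z_\alpha\in M_{d_{t\alpha}\times e_{s\alpha}}(\Bbbk)$, let $W^{V,Z,U}$ be the representation of $Q$ with $W^{V,Z,U}_\alpha=\begin{pmatrix}V_\alpha&Z_\alpha\\0&U_\alpha\end{pmatrix}$;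 let $\mathbb Z^{U,V}$ be the set of $Z$ such that $W^{V,Z,U}$ satisfies the relations of $I$. $\mathcal E_\Lambda(\mathbf e,\mathbf d)$ is the affine variety of triples $(U,V,Z)$ with $U\in\mathrm{rep}_\Lambda(\mathbf e)$, $V\in\mathrm{rep}_\Lambda(\mathbf d)$, $Z\in\mathbb Z^{U,V}$; $\Lambda$ is ext-irreducible if $\mathcal E_\Lambda(\mathbf e,\mathbf d)$ is irreducible for all dimension vectors $\mathbf d,\mathbf e$. *)

From HB Require Import structures.
From mathcomp Require Import all_boot all_order all_algebra.
Set Implicit Arguments. Unset Strict Implicit. Unset Printing Implicit Defensive.
Import GRing.Theory.
Local Open Scope ring_scope.

Section Zariski.
Variable k : fieldType.
Variable J : finType.

Inductive polyfn : ((J -> k) -> k) -> Prop :=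
| pf_const (c : k) : polyfn (fun _ => c)
| pf_coord (j : J) : polyfn (fun v => v j)
| pf_add f g : polyfn f -> polyfn g -> polyfn (fun v => f v + g v)
| pf_mul f g : polyfn f -> polyfn g -> polyfn (fun v => f v * g v).

Definition zariski_closed (Z : (J -> k) -> Prop) : Prop :=
  exists S : ((J -> k) -> k) -> Prop,
    (forall f, S f -> polyfn f) /\ (forall v, Z v <-> (forall f, S f -> f v = 0)).

Definition irreducible (X : (J -> k) -> Prop) : Prop :=
  (exists v, X v) /\
  forall Z1 Z2, zariski_closed Z1 -> zariski_closed Z2 ->
    (forall v, X v -> Z1 v \/ Z2 v) ->
    (forall v, X v -> Z1 v) \/ (forall v, X v -> Z2 v).
End Zariski.

(* matrix-entry coordinates of a family of matrices indexed by I *)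
Definition midx (I : finType) (r c : I -> nat) : finType :=
  {i : I & ('I_(r i) * 'I_(c i))%type}.

Definition mxof (k : Type) (I : finType) (r c : I -> nat) (v : midx r c -> k)
  : forall i : I, 'M[k]_(r i, c i) :=
  fun i => \matrix_(p < r i, q < c i)
             v (existT (fun i => ('I_(r i) * 'I_(c i))%type) i (p, q)).

Section Quiver.
Variable k : fieldType.
Variables (Q0 Q1 : finType) (src tgt : Q1 -> Q0).

(* a path: starting vertex x and arrows a1, a2, ..., an (a1 applied first) *)
Definition path := (Q0 * seq Q1)%type.

Fixpoint pend (x : Q0) (p : seq Q1) : option Q0 :=
  match p with
  | [::] => Some x
  | a :: p' => if src a == x then pend (tgt a) p' else None
  end.

Definition valid_path (p : path) : bool := pend p.1 p.2 != None.

(* elements of the path algebra kQ as formal linear combinations of paths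
   (non-valid "paths" represent 0) *)
Definition kQ := seq (k * path).

Definition coef (f : kQ) (p : path) : k := \sum_(cp <- f | cp.2 == p) cp.1.

Definition kQ_eq (f g : kQ) : Prop :=
  forall p : path, valid_path p -> coef f p = coef g p.

Definition kQ_mul (f g : kQ) : kQ :=
  flatten [seq [seq (cp.1 * cq.1, (cp.2.1, cp.2.2 ++ cq.2.2))
               | cq <- g & pend cp.2.1 cp.2.2 == Some cq.2.1] | cp <- f].

Definition in_ideal (G : seq kQ) (f : kQ) : Prop :=
  exists s : seq (kQ * nat * kQ),
    kQ_eq f (flatten [seq kQ_mul (kQ_mul t.1.1 (nth [::] G t.1.2)) t.2 | t <- s]).

(* the ideal I = <G> is admissible: R^m <= I <= R^2 (R = arrow ideal) *)
Definition admissible (G : seq kQ) : Prop :=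
  (forall r, r \in G -> forall cp, cp \in r -> (2 <= size cp.2.2)%N) /\
  exists m : nat, forall p : path, valid_path p -> size p.2 = m ->
    in_ideal G [:: (1, p)].

Definition Rep (d : Q0 -> nat) := forall a : Q1, 'M[k]_(d (tgt a), d (src a)).

(* evalp V x p y = V_p if p is a path from x to y, and 0 otherwise *)
Fixpoint evalp (d : Q0 -> nat) (V : Rep d) (x : Q0) (p : seq Q1) (y : Q0)
  {struct p} : 'M[k]_(d y, d x) :=
  match p with
  | [::] => if x == y then conform_mx 0 (1%:M : 'M[k]_(d x)) else 0
  | a :: p' => evalp V (tgt a) p' y *m
               (if src a == x then conform_mx 0 (V a) else 0)
  end.

Definition sat_rel (d : Q0 -> nat) (V : Rep d) (r : kQ) : Prop :=
  forall x y : Q0,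
    \sum_(cp <- r) cp.1 *: (if cp.2.1 == x then evalp V x cp.2.2 y else 0) = 0.

Definition satisfies (G : seq kQ) (d : Q0 -> nat) (V : Rep d) : Prop :=
  forall r, r \in G -> sat_rel V r.

Definition repidx (d : Q0 -> nat) := midx (fun a => d (tgt a)) (fun a => d (src a)).

Definition Eidx (e d : Q0 -> nat) : finType :=
  (repidx e + repidx d + midx (fun a => d (tgt a)) (fun a => e (src a)))%type.

Definition Evar (G : seq kQ) (e d : Q0 -> nat) (v : Eidx e d -> k) : Prop :=
  let U : Rep e := mxof (fun j => v (inl (inl j))) in
  let V : Rep d := mxof (fun j => v (inl (inr j))) in
  let Z := mxof (fun j => v (inr j)) in
  let W : Rep (fun x => d x + e x)%N := fun a => block_mx (V a) (Z a) 0 (U a) in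
  satisfies G U /\ satisfies G V /\ satisfies G W.

Definition ext_irreducible (G : seq kQ) : Prop :=
  forall e d : Q0 -> nat, irreducible (Evar G (e:=e) (d:=d)).

Definition Midx (e d : Q0 -> nat) : finType :=
  (repidx e + repidx d + midx d e)%type.

Definition Mvar (G : seq kQ) (e d : Q0 -> nat) (v : Midx e d -> k) : Prop :=
  let V : Rep e := mxof (fun j => v (inl (inl j))) in
  let W : Rep d := mxof (fun j => v (inl (inr j))) in
  let f : forall x : Q0, 'M[k]_(d x, e x) := mxof (fun j => v (inr j)) in
  satisfies G V /\ satisfies G W /\
  (forall a : Q1, W a *m f (src a) = f (tgt a) *m V a) /\
  (forall x : Q0, injective (fun u : 'cV[k]_(e x) => f x *m u)).

Definition mono_irreducible (G : seq kQ) : Prop :=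
  forall e d : Q0 -> nat, (forall x, e x <= d x)%N -> irreducible (Mvar G (e:=e) (d:=d)).

End Quiver.

From HB Require Import structures.
From mathcomp Require Import all_boot all_order all_algebra.
From Stdlib Require Import Classical FunctionalExtensionality.
From mathcomp Require Import ring.
Set Implicit Arguments. Unset Strict Implicit. Unset Printing Implicit Defensive.
Import GRing.Theory.
Local Open Scope ring_scope.

(* Each variety is an image of (an open piece of) the other.  On the open
   subset of M(d, d + e) where the upper block of the monomorphism f is
   invertible, the base change g = [f_up 0; f_down 1] moves f to the standard
   inclusion and conjugating W by g makes it block upper triangular
   [V Z; 0 U], a point of E(e, d).  Conversely E(e', e) x GL(e + e') maps onto
   M(e, e + e'), sending (U, V, Z, g) to the inclusion g [1; 0] of V into
   g W^{V,Z,U} g^-1: every injective matrix is the first block column of an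
   invertible one.  Both maps are regular on their domains (inverses enter only
   through adjugates over nonvanishing determinants), and irreducibility passes
   to continuous images, to nonempty open subsets and to products. *)

Section ZariskiTopology.
Variable k : fieldType.
Local Notation polyfn := (@polyfn k).
Local Notation zariski_closed := (@zariski_closed k).
Local Notation irreducible := (@irreducible k).

Section OneSpace.
Variable J : finType.
Implicit Types (f g h : (J -> k) -> k) (X Z : (J -> k) -> Prop).

Lemma eq_polyfn f g : polyfn f -> f =1 g -> polyfn g.
Proof. by move=> Hf /functional_extensionality <-. Qed.

Lemma polyfn_sum (I : Type) (r : seq I) (P : pred I) (F : I -> (J -> k) -> k) :
  (forall i, polyfn (F i)) -> polyfn (fun v => \sum_(i <- r | P i) F i v).
Proof.
move=> HF; elim: r => [|i r IH].
  by apply: (eq_polyfn (pf_const _ 0)) => v; rewrite big_nil.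
have [Pi|nPi] := boolP (P i).
  by apply: (eq_polyfn (pf_add (HF i) IH)) => v; rewrite big_cons Pi.
by apply: (eq_polyfn IH) => v; rewrite big_cons (negbTE nPi).
Qed.

Lemma polyfn_prod (I : Type) (r : seq I) (P : pred I) (F : I -> (J -> k) -> k) :
  (forall i, polyfn (F i)) -> polyfn (fun v => \prod_(i <- r | P i) F i v).
Proof.
move=> HF; elim: r => [|i r IH].
  by apply: (eq_polyfn (pf_const _ 1)) => v; rewrite big_nil.
have [Pi|nPi] := boolP (P i).
  by apply: (eq_polyfn (pf_mul (HF i) IH)) => v; rewrite big_cons Pi.
by apply: (eq_polyfn IH) => v; rewrite big_cons (negbTE nPi).
Qed.

Lemma zariski_closed_eq0 h : polyfn h -> zariski_closed (fun v => h v = 0).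
Proof. by move=> Hh; exists (eq^~ h); split=> [f ->|v] //; split=> [H f ->|]; last exact. Qed.

Lemma zariski_closedU (Z1 Z2 : (J -> k) -> Prop) :
  zariski_closed Z1 -> zariski_closed Z2 -> zariski_closed (fun v => Z1 v \/ Z2 v).
Proof.
case=> S1 [HS1 HZ1] [S2 [HS2 HZ2]].
exists (fun h => exists f g, [/\ S1 f, S2 g & h = (fun v => f v * g v)]); split.
  by move=> h [f [g [Sf Sg ->]]]; apply: pf_mul; [apply: HS1|apply: HS2].
move=> v; split.
  case=> [/HZ1 H|/HZ2 H] h [f [g [Sf Sg ->]]]; first by rewrite (H f Sf) mul0r.
  by rewrite (H g Sg) mulr0.
move=> H; have [|N1] := classic (Z1 v); [by left|right].
have [f [Sf nf]] : exists f, S1 f /\ f v <> 0.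
  apply: NNPP => N; apply/N1/HZ1 => f Sf.
  by apply: NNPP => nf; exact: N (ex_intro _ f (conj Sf nf)).
apply/HZ2 => g Sg; have /eqP := H _ (ex_intro _ f (ex_intro _ g (And3 Sf Sg erefl))).
by rewrite mulf_eq0 => /orP[/eqP|/eqP].
Qed.

Lemma zariski_closed_bigcap (I : Type) (P : I -> Prop) (Z : I -> (J -> k) -> Prop) :
  (forall i, P i -> zariski_closed (Z i)) -> zariski_closed (fun v => forall i, P i -> Z i v).
Proof.
move=> HZ; pose W i S :=
  (forall f, S f -> polyfn f) /\ (forall v, Z i v <-> forall f, S f -> f v = 0).
exists (fun f => exists i, P i /\ exists2 S, W i S & S f); split.
  by move=> f [i [_ [S [HS _] Sf]]]; apply: HS.
move=> v; split=> [H f [i [Pi [S [_ HZi] Sf]]]|H i Pi].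
  by apply: (HZi v).1 Sf; apply: H.
have [S WS] := HZ i Pi; apply/WS.2 => f Sf.
by apply: H; exists i; split=> //; exists S.
Qed.

Lemma irreducible_open X h :
  irreducible X -> polyfn h -> (exists v, X v /\ h v <> 0) ->
  irreducible (fun v => X v /\ h v <> 0).
Proof.
move=> [_ HX] Hh Hne; split=> // Z1 Z2 C1 C2 Hcov.
have [v Xv|H|H] := HX _ Z2 (zariski_closedU C1 (zariski_closed_eq0 Hh)) C2.
- have [|nh] := classic (h v = 0); first by left; right.
  by case: (Hcov v (conj Xv nh)); [left; left|right].
- by left=> v [Xv nh]; case: (H v Xv).
- by right=> v [Xv _]; apply: H.
Qed.

Variable X : (J -> k) -> Prop.

Definition regular_on (F : (J -> k) -> k) :=
  exists a h, [/\ polyfn a, polyfn h & forall v, X v -> h v <> 0 /\ F v * h v = a v].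

Lemma polyfn_regular_on F : polyfn F -> regular_on F.
Proof.
move=> HF; exists F, (fun _ => 1); split=> //; first exact: pf_const.
by move=> v _; split; [apply/eqP; exact: oner_neq0|rewrite mulr1].
Qed.

Lemma eq_regular_on F1 F2 : (forall v, X v -> F1 v = F2 v) -> regular_on F1 -> regular_on F2.
Proof. by move=> E [a [h [Ha Hh HF]]]; exists a, h; split=> // v Xv; rewrite -E //; apply: HF. Qed.

Lemma regular_on_scale c F :
  polyfn c -> polyfn F -> (forall v, X v -> c v <> 0) -> regular_on (fun v => (c v)^-1 * F v).
Proof.
move=> Hc HF nc; exists F, c; split=> // v /nc cv; split=> //.
by rewrite mulrAC mulVf ?mul1r //; apply/eqP.
Qed.

Lemma regular_onD F1 F2 : regular_on F1 -> regular_on F2 -> regular_on (fun v => F1 v + F2 v).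
Proof.
move=> [a1 [h1 [Ha1 Hh1 E1]]] [a2 [h2 [Ha2 Hh2 E2]]].
exists (fun v => a1 v * h2 v + a2 v * h1 v), (fun v => h1 v * h2 v).
split; [by apply: pf_add; apply: pf_mul|exact: pf_mul|].
move=> v Xv; have [n1 <-] := E1 v Xv; have [n2 <-] := E2 v Xv.
by split; [apply/eqP; rewrite mulf_neq0 //; apply/eqP|ring].
Qed.

Lemma regular_onM F1 F2 : regular_on F1 -> regular_on F2 -> regular_on (fun v => F1 v * F2 v).
Proof.
move=> [a1 [h1 [Ha1 Hh1 E1]]] [a2 [h2 [Ha2 Hh2 E2]]].
exists (fun v => a1 v * a2 v), (fun v => h1 v * h2 v).
split; [exact: pf_mul|exact: pf_mul|].
move=> v Xv; have [n1 <-] := E1 v Xv; have [n2 <-] := E2 v Xv.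
by split; [apply/eqP; rewrite mulf_neq0 //; apply/eqP|ring].
Qed.
End OneSpace.

Section TwoSpaces.
Variables J1 J2 : finType.
Implicit Types (X : (J1 -> k) -> Prop) (phi : (J1 -> k) -> J2 -> k).

Lemma polyfn_comp phi (P : (J2 -> k) -> k) :
  (forall j, polyfn (fun v => phi v j)) -> polyfn P -> polyfn (fun v => P (phi v)).
Proof. by move=> Hphi; elim=> *; [exact: pf_const|exact: Hphi|exact: pf_add|exact: pf_mul]. Qed.

Lemma zariski_closed_comp phi (Z : (J2 -> k) -> Prop) :
  (forall j, polyfn (fun v => phi v j)) -> zariski_closed Z ->
  zariski_closed (fun v => Z (phi v)).
Proof.
move=> Hphi [S [HS HZ]]; exists (fun Q => exists2 P, S P & Q = (fun v => P (phi v))).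
split=> [Q [P SP ->]|v]; first exact: polyfn_comp (HS P SP).
split=> [/(HZ (phi v)) H Q [P SP ->]|H]; first exact: H.
by apply/(HZ (phi v)) => P SP; apply: (H (fun w => P (phi w))); exists P.
Qed.

Lemma regular_on_comp X phi P :
  (forall j, regular_on X (fun v => phi v j)) -> polyfn P -> regular_on X (fun v => P (phi v)).
Proof.
move=> Hphi; elim=> [c|j|*|*]; [exact/polyfn_regular_on/pf_const|exact: Hphi| |].
- exact: regular_onD.
- exact: regular_onM.
Qed.

(* Continuity is only tested on hypersurfaces: every closed set is an
   intersection of those. *)
Definition zariski_continuous_on X phi :=
  forall P, polyfn P ->
    exists P', polyfn P' /\ forall v, X v -> (P (phi v) = 0 <-> P' v = 0).

Lemma regular_continuous_on X phi :
  (forall j, regular_on X (fun v => phi v j)) -> zariski_continuous_on X phi.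
Proof.
move=> Hphi P /(regular_on_comp Hphi) [a [h [Ha _ E]]]; exists a; split=> // v /E [nh <-].
by split=> [->|/eqP]; [rewrite mul0r|rewrite mulf_eq0 (negPf (introN eqP nh)) orbF => /eqP].
Qed.

Lemma zariski_closed_preimage X phi Z :
  zariski_continuous_on X phi -> zariski_closed Z ->
  exists Z', zariski_closed Z' /\ forall v, X v -> (Z (phi v) <-> Z' v).
Proof.
move=> Hphi [S [HS HZ]].
pose S' P' := polyfn P' /\ exists2 P, S P & forall v, X v -> (P (phi v) = 0 <-> P' v = 0).
exists (fun v => forall P', S' P' -> P' v = 0); split; first by exists S'; split=> [P' []|].
move=> v Xv; split=> [/HZ H P' [_ [P SP /(_ v Xv) <-]]|H]; first exact: H.
apply/HZ => P SP; have [P' [HP' E]] := Hphi P (HS P SP).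
by apply/(E v Xv)/H; split=> //; exists P.
Qed.

Lemma irreducible_image X (Y : (J2 -> k) -> Prop) phi :
  irreducible X -> zariski_continuous_on X phi ->
  (forall v, X v -> Y (phi v)) -> (forall w, Y w -> exists2 v, X v & phi v = w) ->
  irreducible Y.
Proof.
move=> [[v0 X0] HX] Hphi XY YX; split; first by exists (phi v0); apply: XY.
move=> Z1 Z2 C1 C2 Hcov.
have [Z1' [C1' E1]] := zariski_closed_preimage Hphi C1.
have [Z2' [C2' E2]] := zariski_closed_preimage Hphi C2.
have [v Xv|H|H] := HX Z1' Z2' C1' C2'.
- by case: (Hcov _ (XY v Xv)) => H; [left; apply/E1|right; apply/E2].
- by left=> w /YX [v Xv <-]; apply/E1 => //; apply: H.
- by right=> w /YX [v Xv <-]; apply/E2 => //; apply: H.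
Qed.

End TwoSpaces.

Definition join_coords (J1 J2 : finType) (x : J1 -> k) (y : J2 -> k) : J1 + J2 -> k :=
  fun j => match j with inl a => x a | inr b => y b end.

Lemma irreducible_prod (J1 J2 : finType) (X : (J1 -> k) -> Prop) (Y : (J2 -> k) -> Prop) :
  irreducible X -> irreducible Y ->
  irreducible (fun v : J1 + J2 -> k => X (fun a => v (inl a)) /\ Y (fun b => v (inr b))).
Proof.
move=> [[x0 X0] HX] [[y0 Y0] HY]; split; first by exists (join_coords x0 y0).
move=> Z1 Z2 C1 C2 Hcov.
have join_split (v : J1 + J2 -> k) : v = join_coords (fun a => v (inl a)) (fun b => v (inr b)).
  by apply: functional_extensionality; case.
have slice (Z : (J1 + J2 -> k) -> Prop) x :
    zariski_closed Z -> zariski_closed (fun y => Z (join_coords x y)).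
  by apply: zariski_closed_comp; case=> j; [exact: pf_const|exact: pf_coord].
have fiberwise (Z : (J1 + J2 -> k) -> Prop) : zariski_closed Z ->
    zariski_closed (fun x => forall y, Y y -> Z (join_coords x y)).
  move=> CZ; apply: zariski_closed_bigcap => y _; apply: zariski_closed_comp CZ.
  by case=> j; [exact: pf_coord|exact: pf_const].
(* Irreducibility of each fiber [x] * Y puts it in Z1 or in Z2. *)
have [x Xx|H|H] := HX _ _ (fiberwise _ C1) (fiberwise _ C2).
- by apply: (HY _ _ (slice _ x C1) (slice _ x C2)) => y Yy; apply: Hcov.
- by left=> v [Xv Yv]; rewrite (join_split v); apply: H.
- by right=> v [Xv Yv]; rewrite (join_split v); apply: H.
Qed.
End ZariskiTopology.

Section AffineSpace.
Variable k : closedFieldType.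

Lemma poly_vanishing_eq0 (p : {poly k}) : (forall t, p.[t] = 0) -> p = 0.
Proof. by move=> p0; apply/eqP; apply: contraT => /closed_nonrootP [t /rootP]. Qed.

Lemma polyfn_along_line (J : finType) (f : (J -> k) -> k) : polyfn f ->
  forall v w : J -> k, exists p : {poly k}, forall t, f (fun j => v j + t * (w j - v j)) = p.[t].
Proof.
move=> Hf v w; elim: Hf => [c|j|g h _ [p Hp] _ [q Hq]|g h _ [p Hp] _ [q Hq]].
- by exists c%:P => t; rewrite hornerC.
- by exists ((v j)%:P + 'X * (w j - v j)%:P) => t; rewrite hornerD hornerM hornerX !hornerC.
- by exists (p + q) => t; rewrite hornerD Hp Hq.
- by exists (p * q) => t; rewrite hornerM Hp Hq.
Qed.

(* If f1 does not vanish at v, then on the line through v and any w the product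
   f1 f2 vanishes while f1 does not vanish identically; as k is infinite,
   f2 vanishes on the whole line, in particular at w. *)
Lemma irreducible_affine_space (J : finType) : irreducible (fun _ : J -> k => True).
Proof.
split; first by exists (fun _ => 0).
move=> Z1 Z2 [S1 [HS1 HZ1]] [S2 [HS2 HZ2]] Hcov.
have [|N1] := classic (forall v, Z1 v); [by left|right].
have [v [f1 [Sf1 nf1]]] : exists v f, S1 f /\ f v <> 0.
  apply: NNPP => N; apply: N1 => v; apply/HZ1 => f Sf.
  by apply: NNPP => nf; apply: N; exists v, f.
move=> w _; apply/HZ2 => f2 Sf2.
have [p Hp] := polyfn_along_line (HS1 _ Sf1) v w.
have [q Hq] := polyfn_along_line (HS2 _ Sf2) v w.
have /eqP : p * q = 0.
  apply: poly_vanishing_eq0 => t; rewrite hornerM -Hp -Hq.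
  case: (Hcov (fun j => v j + t * (w j - v j)) I) => [/HZ1 H|/HZ2 H].
    by rewrite (H _ Sf1) mul0r.
  by rewrite (H _ Sf2) mulr0.
have p_neq0 : p != 0.
  apply: contra_notN nf1 => /eqP p0; move: (Hp 0); rewrite p0 horner0.
  by have -> : (fun j => v j + 0 * (w j - v j)) = v
    by apply: functional_extensionality => j; rewrite mul0r addr0.
rewrite mulf_eq0 (negPf p_neq0) => /eqP q0; move: (Hq 1); rewrite q0 horner0.
by have -> : (fun j => v j + 1 * (w j - v j)) = w
  by apply: functional_extensionality => j; rewrite mul1r addrC subrK.
Qed.

Lemma irreducible_principal_open (J : finType) (h : (J -> k) -> k) :
  polyfn h -> (exists v, h v <> 0) -> irreducible (fun v => h v <> 0).
Proof.
move=> Hh [v hv]; apply: (irreducible_image (phi := id)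
  (irreducible_open (irreducible_affine_space J) Hh _)) => [||w [_ hw]|w hw] //.
- by exists v.
- by apply: regular_continuous_on => j; apply/polyfn_regular_on/pf_coord.
- by exists w.
Qed.
End AffineSpace.

Section PolynomialMatrices.
Variables (k : fieldType) (J : finType).
Local Notation polyfn := (@polyfn k J).

Definition polymx m n (F : (J -> k) -> 'M[k]_(m, n)) := forall i j, polyfn (fun v => F v i j).

Lemma polymx_const m n (A : 'M[k]_(m, n)) : polymx (fun _ => A).
Proof. by move=> i j; exact: pf_const. Qed.

Lemma polymx_coord (I : finType) (r c : I -> nat) (emb : midx r c -> J) x :
  polymx (fun v => mxof (fun j => v (emb j)) x).
Proof.
by move=> i j; apply: (eq_polyfn (pf_coord _ (emb (existT _ x (i, j))))) => v; rewrite mxE.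
Qed.

Lemma polymx_mul m n p (F : (J -> k) -> 'M[k]_(m, n)) (G : (J -> k) -> 'M[k]_(n, p)) :
  polymx F -> polymx G -> polymx (fun v => F v *m G v).
Proof.
move=> HF HG i j; apply: (eq_polyfn (polyfn_sum (index_enum 'I_n) predT
  (F := fun l v => F v i l * G v l j) (fun l => pf_mul (HF i l) (HG l j)))) => v.
by rewrite mxE.
Qed.

Lemma polymx_block m1 m2 n1 n2 (A : (J -> k) -> 'M[k]_(m1, n1)) (B : (J -> k) -> 'M[k]_(m1, n2))
    (C : (J -> k) -> 'M[k]_(m2, n1)) (D : (J -> k) -> 'M[k]_(m2, n2)) :
  polymx A -> polymx B -> polymx C -> polymx D ->
  polymx (fun v => block_mx (A v) (B v) (C v) (D v)).
Proof.
move=> HA HB HC HD i j; rewrite -[i]splitK -[j]splitK.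
case: (split i) => i'; case: (split j) => j'.
- by apply: (eq_polyfn (HA i' j')) => v; rewrite block_mxEul.
- by apply: (eq_polyfn (HB i' j')) => v; rewrite block_mxEur.
- by apply: (eq_polyfn (HC i' j')) => v; rewrite block_mxEdl.
- by apply: (eq_polyfn (HD i' j')) => v; rewrite block_mxEdr.
Qed.

Lemma polymx_usub m1 m2 n (F : (J -> k) -> 'M[k]_(m1 + m2, n)) :
  polymx F -> polymx (fun v => usubmx (F v)).
Proof. by move=> HF i j; apply: (eq_polyfn (HF _ j)) => v; rewrite mxE. Qed.

Lemma polymx_dsub m1 m2 n (F : (J -> k) -> 'M[k]_(m1 + m2, n)) :
  polymx F -> polymx (fun v => dsubmx (F v)).
Proof. by move=> HF i j; apply: (eq_polyfn (HF _ j)) => v; rewrite mxE. Qed.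

Lemma polyfn_det n (F : (J -> k) -> 'M[k]_n) : polymx F -> polyfn (fun v => \det (F v)).
Proof.
move=> HF; apply: polyfn_sum => s; apply: pf_mul; first exact: pf_const.
by apply: polyfn_prod => i; apply: HF.
Qed.

Lemma polymx_adj n (F : (J -> k) -> 'M[k]_n) : polymx F -> polymx (fun v => \adj (F v)).
Proof.
move=> HF i j; apply: (eq_polyfn (pf_mul (pf_const _ ((-1) ^+ (j + i)))
  (polyfn_det (F := fun v => row' j (col' i (F v))) _))); last by move=> v; rewrite mxE.
by move=> a b; apply: (eq_polyfn (HF _ _)) => v; rewrite !mxE.
Qed.
Lemma regular_on_mul_invmx (X : (J -> k) -> Prop) m n p (A : (J -> k) -> 'M[k]_(m, n))
    (g : (J -> k) -> 'M[k]_n) (B : (J -> k) -> 'M[k]_(n, p)) i j :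
  polymx A -> polymx g -> polymx B -> (forall v, X v -> g v \in unitmx) ->
  regular_on X (fun v => (A v *m invmx (g v) *m B v) i j).
Proof.
move=> HA Hg HB g_unit.
apply: (eq_regular_on (F1 := fun v => (\det (g v))^-1 * (A v *m \adj (g v) *m B v) i j)).
  by move=> v /g_unit gv; rewrite /invmx gv -scalemxAr -scalemxAl [RHS]mxE.
apply: regular_on_scale; first exact: polyfn_det.
  by apply: polymx_mul => //; apply: polymx_mul => //; apply: polymx_adj.
by move=> v /g_unit; rewrite unitmxE unitfE => /eqP.
Qed.
End PolynomialMatrices.

Section Matrices.
Variable k : fieldType.

Lemma block_mx_stable m1 m2 n1 n2 (M : 'M[k]_(m1 + m2, n1 + n2)) (V : 'M[k]_(m1, n1)) :
  M *m col_mx 1%:M 0 = col_mx 1%:M 0 *m V -> M = block_mx V (ursubmx M) 0 (drsubmx M).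
Proof.
rewrite -{1}[M]submxK mul_block_col mul_col_mx !mulmx1 !mulmx0 !addr0 mul1mx mul0mx.
by case/eq_col_mx => <- <-; rewrite submxK.
Qed.

Lemma col_mx10_inj m1 m2 n (u1 u2 : 'M[k]_(m1, n)) :
  (col_mx 1%:M 0 : 'M[k]_(m1 + m2, m1)) *m u1 = col_mx 1%:M 0 *m u2 -> u1 = u2.
Proof. by rewrite !mul_col_mx !mul1mx !mul0mx => /eq_col_mx []. Qed.

(* Transposed, this is [complete_unitmx] applied to the row block [(1 0)]. *)
Lemma injective_mx_completion m n (A : 'M[k]_(m + n, m)) :
  injective (fun u : 'cV[k]_m => A *m u) -> {g | g \in unitmx & g *m col_mx 1%:M 0 = A}.
Proof.
move=> A_inj; pose U : 'M[k]_(m, m + n) := row_mx 1%:M 0.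
have UA : U *m col_mx A^T 0 = A^T by rewrite mul_row_col mul1mx mul0mx addr0.
have rankA : \rank A^T = m.
  apply/eqP; apply: inj_row_free => u /(congr1 trmx); rewrite trmx_mul trmxK trmx0 => Au0.
  by apply: trmx_inj; apply: A_inj; rewrite /= Au0 trmx0 mulmx0.
have rankU : \rank U = m.
  apply/eqP; apply: inj_row_free => u.
  by rewrite mul_mx_row mulmx1 mulmx0 -row_mx0 => /eq_row_mx [].
have [g g_unit Ug] : {g | g \in unitmx & U *m col_mx A^T 0 = U *m g}.
  by apply: complete_unitmx; rewrite UA rankA rankU.
exists g^T; first by rewrite unitmx_tr.
by apply: trmx_inj; rewrite trmx_mul trmxK tr_col_mx trmx1 trmx0 -/U -Ug UA.
Qed.

Lemma conj_col_mx10_stable m1 m2 n1 n2 (g1 : 'M[k]_(m1 + m2)) (g2 : 'M[k]_(n1 + n2))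
    (W : 'M[k]_(m1 + m2, n1 + n2)) (V : 'M[k]_(m1, n1)) :
  g1 \in unitmx -> W *m (g2 *m col_mx 1%:M 0) = g1 *m col_mx 1%:M 0 *m V ->
  invmx g1 *m W *m g2 *m col_mx 1%:M 0 = col_mx 1%:M 0 *m V.
Proof. by move=> g1_unit WV; rewrite -!mulmxA WV !mulmxA mulVmx ?mul1mx. Qed.

Lemma prod_det_neq0 (I : finType) (n : I -> nat) (M : forall i, 'M[k]_(n i)) :
  \prod_i \det (M i) <> 0 <-> forall i, M i \in unitmx.
Proof.
split=> [/eqP/prodf_neq0 M_unit i|M_unit]; first by rewrite unitmxE unitfE M_unit.
by apply/eqP/prodf_neq0 => i _; rewrite -unitfE -unitmxE.
Qed.
End Matrices.

Section Representations.
Variable k : fieldType.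
Variables (Q0 Q1 : finType) (src tgt : Q1 -> Q0).
Local Notation Rep := (Rep k src tgt).

Lemma evalp_intertwine (d1 d2 : Q0 -> nat) (V1 : Rep d1) (V2 : Rep d2)
    (T : forall x, 'M[k]_(d2 x, d1 x)) :
  (forall a, V2 a *m T (src a) = T (tgt a) *m V1 a) ->
  forall p x y, evalp V2 x p y *m T x = T y *m evalp V1 x p y.
Proof.
move=> HT; elim=> [|a p IH] x y /=.
  by case: eqP => [<-|_]; rewrite ?mul0mx ?mulmx0 // !conform_mx_id mul1mx mulmx1.
case: eqP => [<-|_]; last by rewrite !mulmx0 mul0mx.
by rewrite !conform_mx_id -mulmxA HT mulmxA IH mulmxA.
Qed.

Lemma satisfies_intertwine (d1 d2 : Q0 -> nat) (V1 : Rep d1) (V2 : Rep d2)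
    (T : forall x, 'M[k]_(d2 x, d1 x)) :
  (forall a, V2 a *m T (src a) = T (tgt a) *m V1 a) ->
  (forall x, exists S : 'M[k]_(d1 x, d2 x), T x *m S = 1%:M) ->
  forall G, satisfies G V1 -> satisfies G V2.
Proof.
move=> HT Tsplit G H1 r rG x y; have [S TS] := Tsplit x.
rewrite -[LHS]mulmx1 -TS mulmxA mulmx_suml.
rewrite (eq_bigr (fun cp => T y *m (cp.1 *: (if cp.2.1 == x then evalp V1 x cp.2.2 y else 0)))).
  by rewrite -mulmx_sumr H1 // mulmx0 mul0mx.
move=> cp _; rewrite -scalemxAl -scalemxAr; congr (_ *: _).
by case: eqP => _; [exact: evalp_intertwine|rewrite mul0mx mulmx0].
Qed.

Definition rep_conj (n : Q0 -> nat) (g : forall x, 'M[k]_(n x)) (W : Rep n) : Rep n :=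
  fun a => invmx (g (tgt a)) *m W a *m g (src a).

Lemma satisfies_rep_conj (n : Q0 -> nat) (g : forall x, 'M[k]_(n x)) (W : Rep n) G :
  (forall x, g x \in unitmx) -> satisfies G W -> satisfies G (rep_conj g W).
Proof.
move=> g_unit; apply: (satisfies_intertwine (T := fun x => invmx (g x))) => [a|x].
  by rewrite /rep_conj -!mulmxA mulmxV ?mulmx1.
by exists (g x); rewrite mulVmx.
Qed.

Lemma eq_satisfies (d : Q0 -> nat) (V1 V2 : Rep d) G :
  (forall a, V1 a = V2 a) -> satisfies G V1 -> satisfies G V2.
Proof. by move=> E; rewrite (functional_extensionality_dep V1 V2 E). Qed.

Lemma satisfies0 (d : Q0 -> nat) (G : seq (kQ k Q0 Q1)) :
  (forall r, r \in G -> forall cp, cp \in r -> (0 < size cp.2.2)%N) ->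
  satisfies G (fun a => 0 : 'M[k]_(d (tgt a), d (src a))).
Proof.
move=> HG r rG x y; rewrite big_seq big1 // => cp /(HG r rG).
case: cp.2.2 => [|a p] //= _; case: eqP => _; rewrite ?scaler0 //.
by case: eqP => [<-|_]; rewrite ?conform_mx_id mulmx0 scaler0.
Qed.

Lemma satisfies_drsub (d1 d2 : Q0 -> nat) (V : Rep d1) (U : Rep d2)
    (Z : forall a, 'M[k]_(d1 (tgt a), d2 (src a))) G :
  @satisfies k Q0 Q1 src tgt G (fun x => d1 x + d2 x)%N
    (fun a => block_mx (V a) (Z a) 0 (U a)) ->
  satisfies G U.
Proof.
apply: (satisfies_intertwine (d1 := fun x => (d1 x + d2 x)%N)
  (T := fun x => row_mx 0 1%:M)) => [a|x].
  by rewrite mul_mx_row mulmx0 mulmx1 mul_row_block !mul0mx !mul1mx !add0r.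
by exists (col_mx 0 1%:M); rewrite mul_row_col mulmx0 mulmx1 add0r.
Qed.
End Representations.

Lemma mxofE (k : Type) (I : finType) (r c : I -> nat) (v : midx r c -> k) x i j :
  mxof v x i j = v (existT _ x (i, j)).
Proof. exact: mxE. Qed.

Lemma mxof_eta (k : Type) (I : finType) (r c : I -> nat) (M : forall i, 'M[k]_(r i, c i)) :
  mxof (fun j => M (projT1 j) (projT2 j).1 (projT2 j).2) = M.
Proof. by apply: functional_extensionality_dep => x; apply/matrixP => p q; rewrite mxE. Qed.

Section MonoToExt.
Variable k : closedFieldType.
Variables (Q0 Q1 : finType) (src tgt : Q1 -> Q0) (G : seq (kQ k Q0 Q1)).
Hypothesis G_no_trivial_paths : forall r, r \in G -> forall cp, cp \in r -> (0 < size cp.2.2)%N.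
Variables e d : Q0 -> nat.
Local Notation D := (fun x => d x + e x)%N.
Local Notation MI := (Midx src tgt d D).
Local Notation EI := (Eidx src tgt e d).

Definition mono_sub (m : MI -> k) : Rep k src tgt d := mxof (fun j => m (inl (inl j))).
Definition mono_amb (m : MI -> k) : Rep k src tgt D := mxof (fun j => m (inl (inr j))).
Definition mono_emb (m : MI -> k) x : 'M[k]_(d x + e x, d x) := mxof (fun j => m (inr j)) x.

Definition straighten (m : MI -> k) x : 'M[k]_(d x + e x) :=
  block_mx (usubmx (mono_emb m x)) 0 (dsubmx (mono_emb m x)) 1%:M.
Definition straighten_det (m : MI -> k) := \prod_x \det (straighten m x).
Definition straightened (m : MI -> k) := rep_conj (straighten m) (mono_amb m).

Definition ext_of_mono (m : MI -> k) : EI -> k := fun j =>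
  match j with
  | inl (inl j) => drsubmx (straightened m (projT1 j)) (projT2 j).1 (projT2 j).2
  | inl (inr j) => m (inl (inl j))
  | inr j => ursubmx (straightened m (projT1 j)) (projT2 j).1 (projT2 j).2
  end.

Definition mono_of_ext (u : EI -> k) : MI -> k := fun j =>
  match j with
  | inl (inl j) => u (inl (inr j))
  | inl (inr j) => block_mx (mxof (fun j => u (inl (inr j))) (projT1 j))
                            (mxof (fun j => u (inr j)) (projT1 j)) 0
                            (mxof (fun j => u (inl (inl j))) (projT1 j)) (projT2 j).1 (projT2 j).2
  | inr j => (col_mx 1%:M 0 : 'M[k]_(d (projT1 j) + e (projT1 j), d (projT1 j)))
               (projT2 j).1 (projT2 j).2
  end.

Lemma straightenE m x : straighten m x *m col_mx 1%:M 0 = mono_emb m x.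
Proof. by rewrite mul_block_col !mulmx1 !mulmx0 !addr0 vsubmxK. Qed.

Lemma polymx_straighten x : polymx (fun m : MI -> k => straighten m x).
Proof. by apply: polymx_block; [apply/polymx_usub/polymx_coord|apply: polymx_const
  |apply/polymx_dsub/polymx_coord|apply: polymx_const]. Qed.

Lemma ext_of_mono_Evar m : Mvar G m -> straighten_det m <> 0 -> Evar G (ext_of_mono m).
Proof.
move=> [sV [sW [comm _]]] /prod_det_neq0 g_unit.
have {}comm a : mono_amb m a *m mono_emb m (src a) = mono_emb m (tgt a) *m mono_sub m a.
  exact: comm.
have sW' : @satisfies k Q0 Q1 src tgt G D
    (fun a => block_mx (mono_sub m a) (ursubmx (straightened m a)) 0 (drsubmx (straightened m a))).
  apply: eq_satisfies (satisfies_rep_conj g_unit sW) => a; apply/block_mx_stable.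
  by apply: conj_col_mx10_stable; rewrite ?straightenE.
split; [|split].
- by apply: (eq_satisfies _ (satisfies_drsub sW')) => a; apply/matrixP => p q; rewrite mxofE.
- by apply: (eq_satisfies _ sV) => a; apply/matrixP => p q; rewrite !mxofE.
- by apply: (eq_satisfies _ sW') => a; congr block_mx; apply/matrixP => p q; rewrite !mxofE.
Qed.

Lemma mono_of_extK u : Evar G u ->
  [/\ Mvar G (mono_of_ext u), straighten_det (mono_of_ext u) <> 0
     & ext_of_mono (mono_of_ext u) = u].
Proof.
move=> [sU [sV sW]].
set U := mxof (fun j => u (inl (inl j))) in sU sW.
set V := mxof (fun j => u (inl (inr j))) in sV sW.
set Z := mxof (fun j => u (inr j)) in sW.
pose W a := block_mx (V a) (Z a) 0 (U a).
have ambE : mono_amb (mono_of_ext u) = W := mxof_eta W.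
have embE : mxof (fun j => mono_of_ext u (inr j)) = fun x => col_mx 1%:M 0 :=
  mxof_eta (fun x => col_mx 1%:M 0 : 'M[k]_(d x + e x, d x)).
have straighten1 x : straighten (mono_of_ext u) x = 1%:M.
  by rewrite /straighten /mono_emb embE col_mxKu col_mxKd -scalar_mx_block.
have straightenedE : straightened (mono_of_ext u) = W.
  apply: functional_extensionality_dep => a.
  by rewrite /straightened /rep_conj !straighten1 invmx1 mul1mx mulmx1 ambE.
split.
- rewrite /Mvar -/(mono_amb _) ambE embE; split; [|split; [|split]] => //.
  + by move=> a; rewrite mul_block_col mul_col_mx !mulmx1 !mulmx0 mul1mx mul0mx !addr0.
  + by move=> x u1 u2 /col_mx10_inj.
- by apply/prod_det_neq0 => x; rewrite straighten1 unitmx1.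
- apply: functional_extensionality; case=> [[[a [p q]]|[a [p q]]]|[a [p q]]] //=.
  + by rewrite straightenedE block_mxKdr mxofE.
  + by rewrite straightenedE block_mxKur mxofE.
Qed.

Lemma regular_on_straightened a i j :
  regular_on (fun m => Mvar G m /\ straighten_det m <> 0) (fun m => straightened m a i j).
Proof.
have one_poly : polymx (fun _ : MI -> k => 1%:M : 'M[k]_(d (tgt a) + e (tgt a))).
  exact: polymx_const.
have WS_poly : polymx (fun m : MI -> k => mono_amb m a *m straighten m (src a)).
  by apply: polymx_mul; [apply: polymx_coord|apply: polymx_straighten].
apply: (eq_regular_on _ (regular_on_mul_invmx i j one_poly (polymx_straighten (x := tgt a))
  WS_poly _)); first by move=> m _; rewrite mul1mx mulmxA.
by move=> m [_ /prod_det_neq0].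
Qed.

Lemma ext_of_mono_continuous :
  zariski_continuous_on (fun m => Mvar G m /\ straighten_det m <> 0) ext_of_mono.
Proof.
apply: regular_continuous_on; case=> [[[a [p q]]|j]|[a [p q]]].
- by apply: (eq_regular_on _ (regular_on_straightened (a := a) (rshift _ p) (rshift _ q)))
    => m _; rewrite /= [RHS]mxE [RHS]mxE.
- exact/polyfn_regular_on/pf_coord.
- by apply: (eq_regular_on _ (regular_on_straightened (a := a) (lshift _ p) (rshift _ q)))
    => m _; rewrite /= [RHS]mxE [RHS]mxE.
Qed.

Lemma Evar0 : Evar G (fun _ : EI => 0).
Proof.
have sat0 (n : Q0 -> nat) (W : Rep k src tgt n) : (forall a, W a = 0) -> satisfies G W.
  by move=> W0; apply: (eq_satisfies _ (satisfies0 src tgt n G_no_trivial_paths)) => a; rewrite W0.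
have mxof0 (I : finType) (r c : I -> nat) x : mxof (fun _ : midx r c => 0 : k) x = 0.
  by apply/matrixP => p q; rewrite !mxE.
split; [|split]; apply: sat0 => a; rewrite ?mxof0 //.
exact: block_mx0.
Qed.

Lemma irreducible_Evar_of_Mvar :
  irreducible (@Mvar k Q0 Q1 src tgt G d D) -> irreducible (@Evar k Q0 Q1 src tgt G e d).
Proof.
move=> Mirr; apply: (irreducible_image _ ext_of_mono_continuous).
- apply: irreducible_open Mirr _ _.
    by apply: polyfn_prod => x; apply/polyfn_det/polymx_straighten.
  by have [M0 det0 _] := mono_of_extK Evar0; exists (mono_of_ext (fun _ : EI => 0)).
- by move=> m [Mm det_m]; apply: ext_of_mono_Evar.
- by move=> u /mono_of_extK [Mm det_m <-]; exists (mono_of_ext u).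
Qed.
End MonoToExt.

Section ExtToMono.
Variable k : closedFieldType.
Variables (Q0 Q1 : finType) (src tgt : Q1 -> Q0) (G : seq (kQ k Q0 Q1)).
Variables e e' : Q0 -> nat.
Local Notation d := (fun x => e x + e' x)%N.
Local Notation EI := (Eidx src tgt e' e).
Local Notation MI := (Midx src tgt e d).
Local Notation FI := (EI + midx d d)%type.

Definition ext_quot (v : FI -> k) : Rep k src tgt e' := mxof (fun j => v (inl (inl (inl j)))).
Definition ext_sub (v : FI -> k) : Rep k src tgt e := mxof (fun j => v (inl (inl (inr j)))).
Definition ext_glue (v : FI -> k) a : 'M[k]_(e (tgt a), e' (src a)) :=
  mxof (fun j => v (inl (inr j))) a.
Definition ext_rep (v : FI -> k) : Rep k src tgt d :=
  fun a => block_mx (ext_sub v a) (ext_glue v a) 0 (ext_quot v a).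
Definition frame (v : FI -> k) x : 'M[k]_(d x) := mxof (fun j => v (inr j)) x.
Definition gl_det (w : midx d d -> k) := \prod_x \det (mxof w x).

Definition framed_point (v : FI -> k) :=
  Evar G (fun j => v (inl j)) /\ gl_det (fun j => v (inr j)) <> 0.
Definition framed_amb (v : FI -> k) : Rep k src tgt d :=
  rep_conj (fun x => invmx (frame v x)) (ext_rep v).
Definition framed_emb (v : FI -> k) x : 'M[k]_(d x, e x) := frame v x *m col_mx 1%:M 0.

Definition mono_of_framed (v : FI -> k) : MI -> k := fun j =>
  match j with
  | inl (inl j) => v (inl (inl (inr j)))
  | inl (inr j) => framed_amb v (projT1 j) (projT2 j).1 (projT2 j).2
  | inr j => framed_emb v (projT1 j) (projT2 j).1 (projT2 j).2
  end.

Lemma mono_of_framed_Mvar v : framed_point v -> Mvar G (mono_of_framed v).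
Proof.
move=> [[_ [sV sW]] /prod_det_neq0 g_unit].
have g'_unit x : invmx (frame v x) \in unitmx by rewrite unitmx_inv g_unit.
have ambE : mxof (fun j => mono_of_framed v (inl (inr j))) = framed_amb v := mxof_eta _.
have embE : mxof (fun j => mono_of_framed v (inr j)) = framed_emb v := mxof_eta _.
rewrite /Mvar ambE embE; split; [|split; [|split]] => //.
- exact: satisfies_rep_conj g'_unit sW.
- move=> a; rewrite /framed_amb /rep_conj /framed_emb invmxK -!mulmxA.
  rewrite (mulmxA (invmx _)) mulVmx // mul1mx; congr (_ *m _).
  by rewrite mul_block_col mul_col_mx !mulmx1 !mulmx0 mul1mx mul0mx !addr0.
- move=> x u1 u2; rewrite /= /framed_emb -!mulmxA => /(congr1 (mulmx (invmx (frame v x)))).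
  by rewrite !mulmxA mulVmx // !mul1mx => /col_mx10_inj.
Qed.

Lemma mono_of_framed_onto m : Mvar G m -> exists2 v, framed_point v & mono_of_framed v = m.
Proof.
move=> [sV [sW [comm inj]]].
set V := mxof (fun j => m (inl (inl j))) in sV comm.
set W := mxof (fun j => m (inl (inr j))) in sW comm.
set f := mxof (fun j => m (inr j)) in comm inj.
pose g x := s2val (injective_mx_completion (inj x)).
have g_unit x : g x \in unitmx := s2valP (injective_mx_completion (inj x)).
have gE x : g x *m col_mx 1%:M 0 = f x := s2valP' (injective_mx_completion (inj x)).
pose W0 := rep_conj g W.
have W0E a : W0 a = block_mx (V a) (ursubmx (W0 a)) 0 (drsubmx (W0 a)).
  by apply/block_mx_stable/conj_col_mx10_stable; rewrite ?gE.
pose v : FI -> k := fun j =>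
  match j with
  | inl (inl (inl j)) => drsubmx (W0 (projT1 j)) (projT2 j).1 (projT2 j).2
  | inl (inl (inr j)) => m (inl (inl j))
  | inl (inr j) => ursubmx (W0 (projT1 j)) (projT2 j).1 (projT2 j).2
  | inr j => g (projT1 j) (projT2 j).1 (projT2 j).2
  end.
have frameE : mxof (fun j => v (inr j)) = g := mxof_eta g.
have extE : ext_rep v = W0.
  apply: functional_extensionality_dep => a; rewrite [RHS]W0E /ext_rep /ext_glue.
  by rewrite (mxof_eta (fun a => ursubmx (W0 a))) /ext_quot (mxof_eta (fun a => drsubmx (W0 a))).
have sW0 : satisfies G (ext_rep v) by rewrite extE; apply: satisfies_rep_conj g_unit sW.
exists v; first split.
- by split; [exact: satisfies_drsub sW0|split].
- by rewrite /gl_det frameE; apply/prod_det_neq0.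
- apply: functional_extensionality; case=> [[j|[a [p q]]]|[x [p q]]] //=.
  + rewrite /framed_amb /rep_conj /frame frameE extE /W0 /rep_conj invmxK !mulmxA mulmxV // mul1mx.
    by rewrite -mulmxA mulmxV // mulmx1 mxofE.
  + by rewrite /framed_emb /frame frameE gE mxofE.
Qed.

Lemma mono_of_framed_continuous : zariski_continuous_on framed_point mono_of_framed.
Proof.
have frame_poly x : polymx (fun v : FI -> k => frame v x) by apply: polymx_coord.
apply: regular_continuous_on; case=> [[j|[a [p q]]]|[x [p q]]].
- exact/polyfn_regular_on/pf_coord.
- have gW_poly : polymx (fun v : FI -> k => frame v (tgt a) *m ext_rep v a).
    apply: polymx_mul => //.
    by apply: polymx_block; (apply: polymx_coord || apply: polymx_const).
  have one_poly : polymx (fun _ : FI -> k => 1%:M : 'M[k]_(d (src a))).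
    exact: polymx_const.
  apply: (eq_regular_on _ (regular_on_mul_invmx p q gW_poly (frame_poly _) one_poly _)).
    by move=> v _; rewrite /= /framed_amb /rep_conj invmxK mulmx1.
  by move=> v [_ /prod_det_neq0].
- by apply/polyfn_regular_on/polymx_mul => //; apply: polymx_const.
Qed.

Lemma irreducible_Mvar_of_Evar :
  irreducible (@Evar k Q0 Q1 src tgt G e' e) -> irreducible (@Mvar k Q0 Q1 src tgt G e d).
Proof.
move=> Eirr; apply: (irreducible_image _ mono_of_framed_continuous).
- apply: irreducible_prod Eirr (irreducible_principal_open _ _).
    by apply: polyfn_prod => x; apply: polyfn_det; apply: polymx_coord.
  exists (fun j => (1%:M : 'M[k]_(d (projT1 j))) (projT2 j).1 (projT2 j).2).
  by rewrite /gl_det (mxof_eta (fun x => 1%:M : 'M[k]_(d x))); apply/prod_det_neq0 => x;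
    rewrite unitmx1.
- exact: mono_of_framed_Mvar.
- exact: mono_of_framed_onto.
Qed.
End ExtToMono.

Unset Implicit Arguments.

Theorem proposition3p2 (k : closedFieldType) (Q0 Q1 : finType)
  (src tgt : Q1 -> Q0) (G : seq (kQ k Q0 Q1)) :
  admissible src tgt G ->
  (ext_irreducible src tgt G <-> mono_irreducible src tgt G).
Proof.
move=> [G_long_paths _].
have G_no_trivial_paths r : r \in G -> forall cp, cp \in r -> (0 < size cp.2.2)%N.
  by move=> rG cp /(G_long_paths r rG)/ltnW.
split=> [Eirr e d le_ed | Mirr e d].
- have -> : d = (fun x => e x + (d x - e x))%N.
    by apply: functional_extensionality => x; rewrite subnKC ?le_ed.
  exact/irreducible_Mvar_of_Evar/Eirr.
- by apply/(irreducible_Evar_of_Mvar G_no_trivial_paths)/Mirr => x; apply: leq_addr.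
Qed.
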